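(* Let $S$ be a free solvable group of finite rank $r$ (free in the variety of solvable groups of some fixed derived length $d$), and let $H=\langle h\rangle$ be the cyclic subgroup generated by a nontrivial element $h\in S$. Then the following are equivalent: (1) $H$ is verbally closed in $S$; (2) $H$ is a retract of $S$; (3) the image of $h$ in the abelianization $A_r=S/S'$ (a free abelian group of rank $r$) is primitive.
   Context: An element of a free abelian group of finite rank is primitive if it belongs to some basis of that group. A subgroup $H$ of a group $G$ is a retract if there is a homomorphism $\phi:G\to H$ that restricts to the identity on $H$. Let $F(X)$ be the free group on a countably infinite set $X=\{x_1,x_2,\dots\}$. A subgroup $H\le G$ is verbally closed if for every $w=w(x_1,\dots,x_n)\in F(X)$ and every $h\in H$, the equation $w(x_1,\dots,x_n)=h$ has a solution in $G$ if and only if it has a solution in $H$. *)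

From HB Require Import structures.
From mathcomp Require Import all_boot all_order all_algebra.
Set Implicit Arguments. Unset Strict Implicit. Unset Printing Implicit Defensive.
Import GRing.Theory.
Local Open Scope ring_scope.

Record Grp := {
  gcar :> Type;
  gmul : gcar -> gcar -> gcar;
  ginv : gcar -> gcar;
  gone : gcar;
  gmulA : forall a b c, gmul a (gmul b c) = gmul (gmul a b) c;
  gmul1 : forall a, gmul gone a = a;
  gmulV : forall a, gmul (ginv a) a = gone
}.

Definition is_hom (G K : Grp) (f : G -> K) : Prop :=
  forall a b, f (gmul a b) = gmul (f a) (f b).

Definition gcomm (G : Grp) (a b : G) : G :=
  gmul (gmul (ginv a) (ginv b)) (gmul a b).

Fixpoint gnpow (G : Grp) (h : G) (n : nat) : G :=
  match n with O => gone G | S n => gmul h (gnpow h n) end.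
Definition gzpow (G : Grp) (h : G) (z : int) : G :=
  match z with Posz n => gnpow h n | Negz n => ginv (gnpow h n.+1) end.

(* G^(0) = G, G^(k+1) = subgroup generated by commutators of elements of
   G^(k) (= set of finite products of such commutators, as the inverse of a
   commutator is a commutator). *)
Inductive in_derived (G : Grp) : nat -> G -> Prop :=
| der0 (g : G) : in_derived 0 g
| der_one (k : nat) : in_derived k.+1 (gone G)
| der_comm (k : nat) (a b g : G) :
    in_derived k a -> in_derived k b -> in_derived k.+1 g ->
    in_derived k.+1 (gmul g (gcomm a b)).

Definition solvable_of_length (G : Grp) (d : nat) : Prop :=
  forall g : G, in_derived d g -> g = gone G.

Definition free_solvable (S : Grp) (d r : nat) (x : 'I_r -> S) : Prop :=
  solvable_of_length S d /\
  forall (G : Grp), solvable_of_length G d ->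
    forall f : 'I_r -> G,
      exists! phi : S -> G, is_hom phi /\ forall i, phi (x i) = f i.

(* Group words: elements of the free group F(X), X = {x_0, x_1, ...},
   represented by terms. *)
Inductive word : Type :=
| wvar of nat
| wone
| wmul of word & word
| winv of word.

Fixpoint weval (G : Grp) (a : nat -> G) (w : word) : G :=
  match w with
  | wvar n => a n
  | wone => gone G
  | wmul u v => gmul (weval a u) (weval a v)
  | winv u => ginv (weval a u)
  end.

(* H (given as a predicate, assumed to be a subgroup) is verbally closed. *)
Definition verbally_closed (G : Grp) (H : G -> Prop) : Prop :=
  forall (w : word) (h : G), H h ->
    ((exists a : nat -> G, weval a w = h) <->
     (exists a : nat -> G, (forall n, H (a n)) /\ weval a w = h)).

Definition retract (G : Grp) (H : G -> Prop) : Prop :=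
  exists phi : G -> G, is_hom phi /\ (forall g, H (phi g)) /\
                       (forall g, H g -> phi g = g).

Definition cyclic_sub (G : Grp) (h : G) : G -> Prop :=
  fun g => exists z : int, g = gzpow h z.

Definition zbasis (r : nat) (s : seq 'rV[int]_r) : Prop :=
  forall u : 'rV[int]_r,
    exists! c : 'I_(size s) -> int, u = \sum_(i < size s) c i *: s`_i.

Definition primitive (r : nat) (v : 'rV[int]_r) : Prop :=
  exists s : seq 'rV[int]_r, zbasis s /\ v \in s.

(* A vector c with (ab h) c = 1 gives the retraction g |-> h^((ab g) c) onto
   <h>, and such a c exists when ab h is primitive (a coordinate of a basis).
   Retracts are verbally closed, as homomorphisms map solutions to solutions.
   Conversely, if <h> is verbally closed and ab h = k w, choose g with ab g = w:
   then h g^-k lies in S', so it is a product of n commutators and the equation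
   [x_1, x_2] ... [x_(2n-1), x_(2n)] x_0^k = h has a solution in S, hence one in
   <h>; there the commutators vanish, so h = (h^z)^k and ab h = (kz) ab h.
   This forces ab h <> 0 (take k = 0, using h <> 1) and then k = +-1.  By the
   Smith normal form, a vector of Z^r divisible only by units is primitive. *)

From mathcomp Require Import all_boot all_order all_algebra zify.
From Stdlib Require Import FunctionalExtensionality.
Set Implicit Arguments. Unset Strict Implicit. Unset Printing Implicit Defensive.
Import GRing.Theory.
Local Open Scope ring_scope.

Lemma int_ind_succ_pred (P : int -> Prop) : P 0 ->
  (forall z, P z -> P (z + 1)) -> (forall z, P z -> P (z - 1)) -> forall z, P z.
Proof.
move=> P0 PS PP; elim/int_rect => // n Pn; first by rewrite -addn1 PoszD; exact: PS.
by rewrite -addn1 PoszD opprD; exact: PP.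
Qed.

Section GroupTheory.
Variable G : Grp.
Implicit Types a b : G.

Lemma gmulrV a : gmul a (ginv a) = gone G.
Proof.
have e := gmulV (ginv a).
by rewrite -[gmul a _]gmul1 -{1}e -gmulA (gmulA (ginv a)) gmulV gmul1.
Qed.

Lemma gmulr1 a : gmul a (gone G) = a.
Proof. by rewrite -(gmulV a) gmulA gmulrV gmul1. Qed.

Lemma gmulI a : injective (gmul a).
Proof. by move=> b c e; rewrite -(gmul1 b) -(gmul1 c) -(gmulV a) -!gmulA e. Qed.

Lemma ginv_uniq a b : gmul a b = gone G -> b = ginv a.
Proof. by move=> e; apply: (@gmulI a); rewrite e gmulrV. Qed.

Lemma ginvM a b : ginv (gmul a b) = gmul (ginv b) (ginv a).
Proof.
by symmetry; apply: ginv_uniq; rewrite -gmulA (gmulA b) gmulrV gmul1 gmulrV.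
Qed.

Lemma gnpowSr a n : gnpow a n.+1 = gmul (gnpow a n) a.
Proof.
elim: n => [|n IHn]; first by rewrite /= gmulr1 gmul1.
by rewrite -[gnpow a n.+2]/(gmul a (gnpow a n.+1)) {1}IHn gmulA.
Qed.

Lemma gzpow_add1 a z : gzpow a (z + 1) = gmul a (gzpow a z).
Proof.
case: z => [n|[|n]]; first by have -> : Posz n + 1 = Posz n.+1 by lia.
  by rewrite /= gmulr1 gmulrV.
have -> : Negz n.+1 + 1 = Negz n by rewrite !NegzE; lia.
change (ginv (gnpow a n.+1) = gmul a (ginv (gnpow a n.+2))).
by rewrite [gnpow a n.+2]gnpowSr ginvM gmulA gmulrV gmul1.
Qed.

Lemma gzpow_sub1 a z : gzpow a (z - 1) = gmul (ginv a) (gzpow a z).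
Proof. by apply: (@gmulI a); rewrite gmulA gmulrV gmul1 -gzpow_add1 subrK. Qed.

Lemma gzpowD a x y : gzpow a (x + y) = gmul (gzpow a x) (gzpow a y).
Proof.
elim/int_ind_succ_pred: x => [|x IHx|x IHx]; first by rewrite add0r gmul1.
  by rewrite addrAC !gzpow_add1 IHx gmulA.
by rewrite addrAC !gzpow_sub1 IHx gmulA.
Qed.

Lemma gzpowC a x y : gmul (gzpow a x) (gzpow a y) = gmul (gzpow a y) (gzpow a x).
Proof. by rewrite -!gzpowD addrC. Qed.

Lemma gcomm_eq1 a b : gmul a b = gmul b a -> gcomm a b = gone G.
Proof. by move=> e; rewrite /gcomm e -gmulA (gmulA (ginv b)) gmulV gmul1 gmulV. Qed.

End GroupTheory.

Section Homomorphism.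
Variables (G K : Grp) (f : G -> K).
Hypothesis f_hom : is_hom f.

Lemma hom1 : f (gone G) = gone K.
Proof. by apply: (@gmulI _ (f (gone G))); rewrite -f_hom !gmulr1. Qed.

Lemma homV a : f (ginv a) = ginv (f a).
Proof. by apply: ginv_uniq; rewrite -f_hom gmulrV hom1. Qed.

Lemma hom_weval (a : nat -> G) w : f (weval a w) = weval (fun n => f (a n)) w.
Proof. by elim: w => //= [|u IHu v IHv|u IHu]; rewrite ?hom1 ?f_hom ?homV ?IHu ?IHv. Qed.

End Homomorphism.

Lemma retract_verbally_closed (G : Grp) (H : G -> Prop) :
  retract H -> verbally_closed H.
Proof.
case=> phi [phi_hom [phiH phi_id]] w h Hh; split; last by case=> a [_ e]; exists a.
case=> a e; exists (fun n => phi (a n)); split => //.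
by rewrite -hom_weval // e phi_id.
Qed.

Definition wcomm (u v : word) : word := wmul (wmul (winv u) (winv v)) (wmul u v).

(* [x_1, x_2] [x_3, x_4] ... [x_(2n-1), x_(2n)]; the variable x_0 stays free. *)
Fixpoint wcomms (n : nat) : word :=
  if n is m.+1 then wmul (wcomms m) (wcomm (wvar m.*2.+1) (wvar m.*2.+2)) else wone.

Fixpoint wnpow (u : word) (n : nat) : word :=
  if n is m.+1 then wmul u (wnpow u m) else wone.

Definition wzpow (u : word) (k : int) : word :=
  match k with Posz n => wnpow u n | Negz n => winv (wnpow u n.+1) end.

Section WordEvaluation.
Variable G : Grp.

Lemma weval_wzpow (a : nat -> G) u k : weval a (wzpow u k) = gzpow (weval a u) k.
Proof.
have weval_wnpow n : weval a (wnpow u n) = gnpow (weval a u) n by elim: n => //= n ->.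
by case: k => n /=; rewrite weval_wnpow.
Qed.

Lemma eq_weval_wcomms n (a b : nat -> G) :
  (forall i, (0 < i <= n.*2)%N -> a i = b i) -> weval a (wcomms n) = weval b (wcomms n).
Proof.
elim: n => //= n IHn eq_ab.
by rewrite IHn => [|i Hi]; rewrite ?eq_ab //; lia.
Qed.

Lemma in_derived1_weval_wcomms (g : G) :
  in_derived 1 g -> exists n (a : nat -> G), weval a (wcomms n) = g.
Proof.
move Ek: 1%N => k D; elim: D Ek => [//|_ _|k' a b g' _ _ _ _ _ IH Ek].
  by exists 0%N, (fun _ => gone G).
have [n [a' <-]] := IH Ek.
exists n.+1, (fun i => if i == n.*2.+1 then a else if i == n.*2.+2 then b else a' i).
rewrite /= !eqxx ifN; last by lia.
congr gmul; apply: eq_weval_wcomms => i Hi.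
by rewrite !ifN //; lia.
Qed.

Lemma weval_wcomms_commuting n (a : nat -> G) :
  (forall i j, gmul (a i) (a j) = gmul (a j) (a i)) -> weval a (wcomms n) = gone G.
Proof. by move=> aC; elim: n => //= n ->; rewrite gmul1; exact: gcomm_eq1. Qed.

End WordEvaluation.

Lemma verbally_closed_cyclic_root (G : Grp) (h g : G) (k : int) :
  verbally_closed (cyclic_sub h) -> in_derived 1 (gmul h (ginv (gzpow g k))) ->
  exists z, h = gzpow (gzpow h z) k.
Proof.
move=> hVC /in_derived1_weval_wcomms [n [a ea]].
pose W := wmul (wcomms n) (wzpow (wvar 0) k).
have hh : cyclic_sub h h by exists 1; rewrite /= gmulr1.
have [b [bh]] : exists b, (forall i, cyclic_sub h (b i)) /\ weval b W = h.
  apply/(hVC W h hh); exists (fun i => if i == 0%N then g else a i).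
  rewrite /= weval_wzpow /= (@eq_weval_wcomms _ n _ a) => [|i Hi]; last by rewrite ifN //; lia.
  by rewrite ea -gmulA gmulV gmulr1.
rewrite /= weval_wzpow weval_wcomms_commuting ?gmul1 => [/= eh|i j].
  by have [z bz] := bh 0%N; exists z; rewrite -bz eh.
by have [x ->] := bh i; have [y ->] := bh j; exact: gzpowC.
Qed.

Definition indivisible r (v : 'rV[int]_r) : Prop :=
  forall (k : int) w, v = k *: w -> k \is a GRing.unit.

Definition unimodular_row r (v : 'rV[int]_r) : Prop :=
  exists c : 'cV[int]_r, v *m c = 1.

Section Abelianization.
Variables (r : nat) (S : Grp) (ab : S -> 'rV[int]_r).
Hypothesis ab_hom : forall a b : S, ab (gmul a b) = ab a + ab b.

Lemma ab1 : ab (gone S) = 0.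
Proof. by apply: (addrI (ab (gone S))); rewrite addr0 -ab_hom gmul1. Qed.

Lemma abV a : ab (ginv a) = - ab a.
Proof. by apply/eqP; rewrite -addr_eq0 -ab_hom gmulV ab1. Qed.

Lemma ab_zpow g k : ab (gzpow g k) = k *: ab g.
Proof.
elim/int_ind_succ_pred: k => [|k IHk|k IHk]; first by rewrite scale0r ab1.
  by rewrite gzpow_add1 ab_hom IHk scalerDl scale1r addrC.
by rewrite gzpow_sub1 ab_hom IHk abV scalerBl scale1r addrC.
Qed.

Lemma unimodular_row_retract h : unimodular_row (ab h) -> retract (cyclic_sub h).
Proof.
case=> c abhc; exists (fun g => gzpow h ((ab g *m c) 0 0)); split; [|split].
- by move=> a b; rewrite ab_hom mulmxDl mxE gzpowD.
- by move=> g; eexists.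
- by move=> _ [z ->]; rewrite ab_zpow -scalemxAl abhc !mxE mulr1.
Qed.

Hypothesis ab_surj : forall v : 'rV[int]_r, exists g : S, ab g = v.
Hypothesis ab_ker : forall g : S, ab g = 0 -> in_derived 1 g.

Lemma verbally_closed_indivisible h : h <> gone S ->
  verbally_closed (cyclic_sub h) -> indivisible (ab h).
Proof.
move=> h_neq1 hVC k w ehw.
have root k' g : ab h = k' *: ab g -> exists z, h = gzpow (gzpow h z) k'.
  move=> e; apply: (@verbally_closed_cyclic_root _ h g) => //; apply: ab_ker.
  by rewrite ab_hom abV ab_zpow -e subrr.
have abh_neq0 : ab h != 0.
  apply/eqP => abh0; apply: h_neq1.
  have [z ->] : exists z, h = gzpow (gzpow h z) 0.
    by apply: (root _ (gone S)); rewrite abh0 scale0r.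
  by [].
have [g ew] := ab_surj w; rewrite -ew in ehw; have [z ez] := root k g ehw.
apply/unitrPr; exists z; apply/eqP; move/(congr1 ab)/eqP: ez.
rewrite !ab_zpow scalerA eq_sym -subr_eq0 -{2}[ab h]scale1r -scalerBl.
by rewrite scalemx_eq0 (negPf abh_neq0) orbF subr_eq0.
Qed.

End Abelianization.

Lemma zbasis_coord_mx r (s : seq 'rV[int]_r) : zbasis s ->
  exists C : 'M[int]_(r, size s), forall u, u = \sum_j (u *m C) 0 j *: s`_j.
Proof.
move=> sB.
have /fin_all_exists [c ec] (i : 'I_r) :
    exists c : 'I_(size s) -> int, delta_mx 0 i = \sum_j c j *: s`_j.
  by have [c [ec _]] := sB (delta_mx 0 i); exists c.
exists (\matrix_(i, j) c i j) => u.
rewrite {1}[u]row_sum_delta; under eq_bigr => i _ do rewrite ec scaler_sumr.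
rewrite exchange_big; apply: eq_bigr => j _ /=.
by rewrite !mxE scaler_suml; apply: eq_bigr => i _; rewrite mxE scalerA.
Qed.

Lemma primitive_unimodular_row r (v : 'rV[int]_r) : primitive v -> unimodular_row v.
Proof.
case=> s [sB vs]; have [C eC] := zbasis_coord_mx sB.
pose j0 : 'I_(size s) := Ordinal (etrans (index_mem v s) vs).
have vC : (v *m C) 0 j0 = 1.
  have [c [_ c_uniq]] := sB v.
  have /(congr1 (fun f => f j0)) : (fun j => (v *m C) 0 j) = (fun j => (j == j0)%:R).
    rewrite -(c_uniq _ (eC v)); apply: c_uniq.
    rewrite (bigD1 j0) //= eqxx scale1r nth_index // big1 ?addr0 // => j /negPf ->.
    by rewrite scale0r.
  by rewrite eqxx.
exists (col j0 C); apply/rowP => i.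
by rewrite ord1 colE mulmxA -colE [LHS]mxE vC mxE.
Qed.

Lemma zbasis_rows_unitmx r (A : 'M[int]_r) :
  A \in unitmx -> zbasis [seq row i A | i <- enum 'I_r].
Proof.
move=> A_unit u.
have rowsA (i : 'I_r) : [seq row i A | i <- enum 'I_r]`_i = row i A.
  by rewrite (nth_map i) ?size_enum_ord // nth_ord_enum.
move: rowsA; rewrite size_map size_enum_ord => rowsA.
have combE (c : 'I_r -> int) :
    \sum_i c i *: [seq row i A | i <- enum 'I_r]`_i = \row_i c i *m A.
  by rewrite mulmx_sum_row; apply: eq_bigr => i _; rewrite mxE rowsA.
exists (fun i => (u *m invmx A) 0 i); split.
  rewrite combE (_ : \row_i _ = u *m invmx A) ?mulmxKV //.
  by apply/rowP => i; rewrite mxE.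
move=> c ->; apply: functional_extensionality => i.
by rewrite combE mulmxK // mxE.
Qed.

Lemma indivisible_primitive r (v : 'rV[int]_r) : indivisible v -> primitive v.
Proof.
case: r v => [|r] v vI.
  by have := vI 0 v; rewrite scale0r thinmx0 unitr0 => /(_ erefl).
have [L _ [R R_unit [d _ vLDR]]] := int_Smith_normal_form v.
pose k := L 0 0 * d`_0.
have v_k : v = k *: row 0 R.
  rewrite vLDR rowE scalemxAl; congr (_ *m R); apply/rowP => -[[|j] lt_j].
    by rewrite !mxE big_ord1 !mxE /= mulr1n mulr1.
  by rewrite !mxE big_ord1 !mxE /= !mulr0n !mulr0.
pose R' := diag_mx (\row_i (if i == 0 then k else 1)) *m R.
exists [seq row i R' | i <- enum 'I_r.+1]; split.
  apply: zbasis_rows_unitmx; rewrite unitmx_mul R_unit andbT unitmxE det_diag.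
  by rewrite big_ord_recl big1 ?mulr1 ?mxE ?(vI _ _ v_k) // => i _; rewrite mxE.
apply/mapP; exists 0; first by rewrite mem_enum.
by rewrite row_mul row_diag_mx -scalemxAl -rowE mxE v_k.
Qed.

Theorem lemma3p1 (d r : nat) (S : Grp) (x : 'I_r -> S)
    (hd : (1 <= d)%N) (hS : free_solvable d x)
    (ab : S -> 'rV[int]_r)
    (ab_hom : forall a b : S, ab (gmul a b) = ab a + ab b)
    (ab_surj : forall v : 'rV[int]_r, exists g : S, ab g = v)
    (ab_ker : forall g : S, ab g = 0 <-> in_derived 1 g)
    (h : S) (hnt : h <> gone S) :
  (verbally_closed (cyclic_sub h) <-> retract (cyclic_sub h)) /\
  (retract (cyclic_sub h) <-> primitive (ab h)).
Proof.
have vc_primitive : verbally_closed (cyclic_sub h) -> primitive (ab h).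
  move=> hVC; apply: indivisible_primitive.
  by apply: verbally_closed_indivisible => // g /ab_ker.
have primitive_retract : primitive (ab h) -> retract (cyclic_sub h).
  by move=> /primitive_unimodular_row; exact: unimodular_row_retract.
have retract_vc := @retract_verbally_closed S (cyclic_sub h).
by split; split; auto.
Qed.
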